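(* Let $0<s<1$, $0<\tilde\delta<1/16$ and $1<\tilde R<1/s$, and let $n_0$ be the constant of the context. Then there exists $m_0''\in\mathbb{N}$ (depending on $s,\tilde\delta,\tilde R$) such that whenever $m>m_0''$, $1< R<\min(\tilde R,3/2)$, $(r_j)_{j=1}^{m-1}\in E_{\varepsilon}$ with $\varepsilon=\log(R^{1/n_0})$, $w\in\overline D(0,3/4)$ and $\tilde\delta\le\delta\le 1/16$, the map $\iota=\iota^{w,\delta,m,R,(r_j)}$ satisfies \[\operatorname{supp}(\iota_{\bar z})\subset\{z\in\mathbb{D}:|z|>s\}.\]
   Context: $\psi_{\delta,m}$: with $b(x)=\exp(1+\frac1{x^2-1})$ for $0\le x<1$, $b(x)=0$ for $x\ge 1$, $r=1-4\delta/m$, $\hat\eta(x)=1$ for $x\le r$, $\hat\eta(x)=b(\frac{x-r}{1-r})$ for $r\le x\le1$, $\hat\eta(x)=0$ for $x\ge1$, set $\psi_{\delta,m}(z)=z^m+\delta z\hat\eta(|z|)$ on $\mathbb{D}$. $\beta_{R,M,(r_j)}$ for $M\in\mathbb N$, $R>1$, $(r_j)_{j=1}^M\in E_\varepsilon$ (where $\xi_j=e^{(2j-1)\pi i/M}$ and $E_\varepsilon=\{(r_j)\in\prod_{j=1}^M\exp(\overline D(0,\varepsilon)):\frac{r_{j+1}\xi_{j+1}-r_j\xi_j}{\xi_{j+1}-\xi_j}\in\exp(\overline D(0,\varepsilon)),1\le j\le M\}$, indices mod $M$): it equals the identity on $|z|\ge R$ and $|z|\le R^{-1}$, and on $R^{-1}<|z|<R$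 it is $\beta(e^\zeta)=e^{\hat\beta(\zeta)}$ where $\hat\beta$ is the $2\pi i$-periodic piecewise affine map on the strip $|\operatorname{Re}\zeta|\le\log R$, affine on the triangles $(a_j,a_{j+1},a_j^{\pm})$, $(a_{j+1},a_j^{\pm},a_{j+1}^{\pm})$ with $a_j=(2j-1)\pi i/M$, $a_j^\pm=\pm\log R+a_j$, fixing $a_j^\pm$ and sending $a_j\mapsto a_j+\operatorname{Log}r_j$. There are constants $m_0'$, $n_0$ such that for $M>m_0'$, $1<R<3/2$, $\varepsilon=\log(R^{1/n_0})$ this $\beta$ is a quasiconformal homeomorphism of $\mathbb{C}$ with $\beta(\xi_j)=r_j\xi_j$. For $\Lambda>0$ set $\beta^\Lambda(z)=\Lambda\beta(z/\Lambda)$. $\rho_w$ for $w\in\overline D(0,3/4)$: $\rho_w(z)=z+w$ for $|z|\le1/8$ and $\rho_w(z)=z\frac{8|z|-1}{7}+(z+w)\frac{8-8|z|}{7}$ for $1/8\le|z|\le1$. $\Lambda(\delta,m)=\delta(\delta/m)^{1/(m-1)}\frac{m-1}{m}$, and $\iota^{w,\delta,m,R,(r_j)}=\rho_w\circ\beta^{\Lambda(\delta,m)}_{R,m-1,(r_j)_{j=1}^{m-1}}\circ\psi_{\delta,m}:\mathbb{D}\to\mathbb{D}$. *)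

From Stdlib Require Import Reals Lra ZArith.
Open Scope R_scope.

Definition Cplx : Type := (R * R)%type.
Definition Cre (z : Cplx) : R := fst z.
Definition Cim (z : Cplx) : R := snd z.
Definition C0 : Cplx := (0, 0).
Definition C1 : Cplx := (1, 0).
Definition Ci : Cplx := (0, 1).
Definition Cadd (z w : Cplx) : Cplx := (Cre z + Cre w, Cim z + Cim w).
Definition Copp (z : Cplx) : Cplx := (- Cre z, - Cim z).
Definition Csub (z w : Cplx) : Cplx := Cadd z (Copp w).
Definition Cmul (z w : Cplx) : Cplx :=
  (Cre z * Cre w - Cim z * Cim w, Cre z * Cim w + Cim z * Cre w).
Definition Cscal (a : R) (z : Cplx) : Cplx := (a * Cre z, a * Cim z).
Definition Cabs (z : Cplx) : R := sqrt (Cre z * Cre z + Cim z * Cim z).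
Definition Cinv (z : Cplx) : Cplx :=
  let d := Cre z * Cre z + Cim z * Cim z in (Cre z / d, - Cim z / d).
Definition Cdiv (z w : Cplx) : Cplx := Cmul z (Cinv w).
Fixpoint Cpow (z : Cplx) (n : nat) : Cplx :=
  match n with O => C1 | S k => Cmul z (Cpow z k) end.
Definition Cexp (z : Cplx) : Cplx := (exp (Cre z) * cos (Cim z), exp (Cre z) * sin (Cim z)).
(* principal argument in (-PI, PI] *)
Definition Carg (z : Cplx) : R :=
  let x := Cre z in let y := Cim z in
  if Rlt_dec 0 x then atan (y / x)
  else if Rlt_dec x 0 then
         (if Rle_dec 0 y then atan (y / x) + PI else atan (y / x) - PI)
  else if Rlt_dec 0 y then PI / 2
  else if Rlt_dec y 0 then - (PI / 2) else 0.
Definition CLog (z : Cplx) : Cplx := (ln (Cabs z), Carg z).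

Definition in_exp_closed_disc (eps : R) (z : Cplx) : Prop :=
  exists zeta : Cplx, Cabs zeta <= eps /\ z = Cexp zeta.

Definition bump (x : R) : R :=
  if Rle_dec 0 x then (if Rlt_dec x 1 then exp (1 + / (x * x - 1)) else 0) else 0.

Definition eta_hat (delta : R) (m : nat) (x : R) : R :=
  let r := 1 - 4 * delta / INR m in
  if Rle_dec x r then 1
  else if Rle_dec x 1 then bump ((x - r) / (1 - r))
  else 0.

Definition psi (delta : R) (m : nat) (z : Cplx) : Cplx :=
  Cadd (Cpow z m) (Cscal (delta * eta_hat delta m (Cabs z)) z).

(* indices are taken mod M, in {1,...,M}: successor of j *)
Definition idx_next (M j : nat) : nat := if Nat.eqb j M then 1%nat else S j.

Definition xi (M j : nat) : Cplx := Cexp (0, (2 * INR j - 1) * PI / INR M).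

(* E_eps for a sequence r : nat -> Cplx (only r 1, ..., r M matter) *)
Definition E_eps (M : nat) (eps : R) (r : nat -> Cplx) : Prop :=
  forall j : nat, (1 <= j <= M)%nat ->
    in_exp_closed_disc eps (r j) /\
    in_exp_closed_disc eps
      (Cdiv (Csub (Cmul (r (idx_next M j)) (xi M (idx_next M j))) (Cmul (r j) (xi M j)))
            (Csub (xi M (idx_next M j)) (xi M j))).

(* floor via Stdlib's [up] : IZR (up x) - 1 <= x < IZR (up x) *)
Definition floorR (x : R) : Z := (up x - 1)%Z.

(* The 2 pi i-periodic piecewise affine map hat-beta on the strip
   |Re zeta| <= log R.  Writing  a_j = i y_j, y_j = (2j-1) pi / M,
   L = log R, and for zeta with y_j <= Im zeta < y_{j+1}:
     x = |Re zeta| / L in [0,1],  u = (Im zeta - y_j) / (2 pi / M) in [0,1],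
   the point zeta lies in the triangle (a_j, a_{j+1}, a_j^{+-}) iff x + u <= 1
   and in (a_{j+1}, a_j^{+-}, a_{j+1}^{+-}) iff x + u >= 1.  The affine map on a
   triangle fixing a_j^{+-}, a_{j+1}^{+-} and sending a_k to a_k + Log r_k is
   zeta |-> zeta + (barycentric interpolation of the vertex displacements):
     x + u <= 1 :  zeta + (1-x-u) Log r_j + u Log r_{j+1}
     x + u >= 1 :  zeta + (1-x) Log r_{j+1}
   (the two formulas agree on x + u = 1). *)
Definition beta_hat (R0 : R) (M : nat) (r : nat -> Cplx) (zeta : Cplx) : Cplx :=
  let L := ln R0 in
  let th := Cim zeta in
  let j0 := floorR ((th * INR M / PI + 1) / 2) in
  let jj := Z.to_nat (Z.modulo (j0 - 1) (Z.of_nat M) + 1) in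
  let jn := idx_next M jj in
  let yj := (2 * IZR j0 - 1) * PI / INR M in
  let u := (th - yj) / (2 * PI / INR M) in
  let x := Rabs (Cre zeta) / L in
  let disp :=
    if Rle_dec (x + u) 1
    then Cadd (Cscal (1 - x - u) (CLog (r jj))) (Cscal u (CLog (r jn)))
    else Cscal (1 - x) (CLog (r jn)) in
  Cadd zeta disp.

Definition beta (R0 : R) (M : nat) (r : nat -> Cplx) (z : Cplx) : Cplx :=
  if Rle_dec R0 (Cabs z) then z
  else if Rle_dec (Cabs z) (/ R0) then z
  else Cexp (beta_hat R0 M r (CLog z)).

Definition betaL (Lam R0 : R) (M : nat) (r : nat -> Cplx) (z : Cplx) : Cplx :=
  Cscal Lam (beta R0 M r (Cscal (/ Lam) z)).

Definition rho (w : Cplx) (z : Cplx) : Cplx :=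
  if Rle_dec (Cabs z) (1 / 8) then Cadd z w
  else Cadd (Cscal ((8 * Cabs z - 1) / 7) z) (Cscal ((8 - 8 * Cabs z) / 7) (Cadd z w)).

Definition Lambda (delta : R) (m : nat) : R :=
  delta * Rpower (delta / INR m) (1 / (INR m - 1)) * ((INR m - 1) / INR m).

Definition iota (w : Cplx) (delta : R) (m : nat) (R0 : R) (r : nat -> Cplx) (z : Cplx) : Cplx :=
  rho w (betaL (Lambda delta m) R0 (m - 1) r (psi delta m z)).

(* f is real-differentiable at z with partial derivatives p = f_x, q = f_y *)
Definition real_diff_at (f : Cplx -> Cplx) (z p q : Cplx) : Prop :=
  forall eps : R, 0 < eps -> exists d : R, 0 < d /\
    forall h : Cplx, Cabs h < d ->
      Cabs (Csub (Csub (f (Cadd z h)) (f z))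
                 (Cadd (Cscal (Cre h) p) (Cscal (Cim h) q))) <= eps * Cabs h.

(* f_{zbar}(z) = (f_x + i f_y)/2 exists and vanishes at z *)
Definition dbar_zero_at (f : Cplx -> Cplx) (z : Cplx) : Prop :=
  exists p q : Cplx, real_diff_at f z p q /\
    Cscal (1 / 2) (Cadd p (Cmul Ci q)) = C0.

Definition Copen (U : Cplx -> Prop) : Prop :=
  forall z, U z -> exists e, 0 < e /\ forall y, Cabs (Csub y z) < e -> U y.

Definition unit_disc (z : Cplx) : Prop := Cabs z < 1.

(* supp(f_{zbar}) (a closed subset of the unit disc D, namely D minus the
   largest open set on which f_{zbar} = 0) is contained in A *)
Definition supp_dbar_subset (f : Cplx -> Cplx) (A : Cplx -> Prop) : Prop :=
  exists U : Cplx -> Prop, Copen U /\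
    (forall z, unit_disc z -> ~ A z -> U z) /\
    (forall z, U z -> unit_disc z -> dbar_zero_at f z).

(* Near the origin every factor of iota is trivial or holomorphic:
   eta_hat = 1 on |z| <= 1 - 4 delta/m, so psi(z) = z^m + delta z there;
   beta is the identity on |z| <= 1/R0, hence beta^Lambda on |z| <= Lambda/R0;
   rho_w is the translation by w on |z| <= 1/8.  Since Lambda(delta,m) -> delta
   uniformly for delta >= dt, while z^m -> 0 on any disc of radius s1 < 1, for
   m large |z^m + delta z| <= delta s1 + o(1) stays below Lambda/R0 as soon as
   s1 < 1/Rt <= 1/R0.  Choosing s < s1 < 1/Rt, iota then equals the polynomial
   z^m + delta z + w on the disc |z| < s1, so iota_zbar = 0 there. *)

From Stdlib Require Import Reals Lra Lia ZArith.
From Coquelicot Require Import Coquelicot.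
From Pilot Require Import Defs.
Open Scope R_scope.

Lemma eventually_gt (B : R) : eventually (fun m => B < INR m).
Proof.
  destruct (archimed (Rabs B)) as [HB _].
  exists (Z.to_nat (up (Rabs B))); intros n Hn.
  apply le_INR in Hn.
  assert (Hup : (0 < up (Rabs B))%Z) by (apply lt_IZR; pose proof (Rabs_pos B); simpl; lra).
  rewrite INR_IZR_INZ, Z2Nat.id in Hn by lia.
  pose proof (Rle_abs B); lra.
Qed.

Lemma pow_eventually_le (q t : R) : 0 <= q < 1 -> 0 < t -> eventually (fun m => q ^ m <= t).
Proof.
  intros Hq Ht.
  destruct (pow_lt_1_zero q ltac:(rewrite Rabs_right; lra) t Ht) as [N HN].
  exists N; intros m Hm.
  specialize (HN m Hm); rewrite Rabs_right in HN; [lra | apply Rle_ge, pow_le; lra].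
Qed.

(* A crude bound on ln, enough to get ln m = o(m). *)
Lemma ln_le_twice_sqrt (x : R) : 0 < x -> ln x <= 2 * sqrt x.
Proof.
  intros Hx. pose proof (sqrt_lt_R0 x Hx) as Hs.
  rewrite <- (sqrt_sqrt x) at 1 by lra.
  rewrite ln_mult by auto.
  pose proof (exp_ineq1_le (ln (sqrt x))) as H. rewrite exp_ln in H by auto. lra.
Qed.

(* (delta/m)^(1/(m-1)) -> 1, uniformly for delta >= dt: its logarithm is
   (ln delta - ln m)/(m-1) >= -(|ln dt| + 2 sqrt m)/(m-1). *)
Lemma root_eventually_ge (dt eps : R) : 0 < dt -> 0 < eps ->
  eventually (fun m => forall delta, dt <= delta ->
    1 - eps <= Rpower (delta / INR m) (1 / (INR m - 1))).
Proof.
  intros Hdt Heps.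
  set (K := Rabs (ln dt)).
  apply (filter_imp (fun m => Rmax 4 (Rmax ((8 / eps) ^ 2) (4 * K / eps)) < INR m));
    [| apply eventually_gt].
  intros m Hm delta Hdelta.
  assert (Hm4 : 4 < INR m) by (eapply Rle_lt_trans; [apply Rmax_l | exact Hm]).
  assert (Hsq : (8 / eps) ^ 2 < INR m)
    by (eapply Rle_lt_trans; [eapply Rle_trans; [apply Rmax_l | apply Rmax_r] | exact Hm]).
  assert (HK : 4 * K / eps < INR m)
    by (eapply Rle_lt_trans; [eapply Rle_trans; [apply Rmax_r | apply Rmax_r] | exact Hm]).
  (* ln delta >= -K and ln m <= 2 sqrt m, so ln (delta/m) >= -eps (m - 1) *)
  assert (Hlndelta : - K <= ln delta).
  { unfold K. pose proof (Rle_abs (- ln dt)). rewrite Rabs_Ropp in H.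
    destruct (Rle_lt_or_eq_dec _ _ Hdelta) as [Hlt | <-]; [| lra].
    pose proof (ln_increasing _ _ Hdt Hlt); lra. }
  assert (Hsqrt : 8 / eps <= sqrt (INR m)).
  { rewrite <- (sqrt_pow2 (8 / eps)) by (apply Rlt_le, Rdiv_lt_0_compat; lra).
    apply sqrt_le_1_alt; lra. }
  assert (Heps8 : 8 <= eps * sqrt (INR m)).
  { apply (Rmult_le_compat_l eps) in Hsqrt; [| lra].
    replace (eps * (8 / eps)) with 8 in Hsqrt by (field; lra); exact Hsqrt. }
  assert (HepsK : 4 * K <= eps * INR m).
  { apply Rlt_le, (Rmult_le_compat_l eps) in HK; [| lra].
    replace (eps * (4 * K / eps)) with (4 * K) in HK by (field; lra); lra. }
  pose proof (ln_le_twice_sqrt (INR m) ltac:(lra)) as Hlnm.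
  pose proof (sqrt_sqrt (INR m) ltac:(lra)) as Hsqsq.
  pose proof (sqrt_pos (INR m)).
  assert (Hln : - eps * (INR m - 1) <= ln (delta / INR m)).
  { unfold Rdiv; rewrite ln_mult, ln_Rinv; try apply Rinv_0_lt_compat; try lra.
    assert (0 <= K) by apply Rabs_pos. nra. }
  unfold Rpower. eapply Rle_trans; [| apply exp_ineq1_le].
  apply (Rmult_le_compat_l (1 / (INR m - 1))) in Hln; [| apply Rlt_le, Rdiv_lt_0_compat; lra].
  replace (1 / (INR m - 1) * (- eps * (INR m - 1))) with (- eps) in Hln by (field; lra).
  lra.
Qed.

Lemma ratio_eventually_ge (c : R) : c < 1 -> eventually (fun m => c <= (INR m - 1) / INR m).
Proof.
  intros Hc.
  apply (filter_imp (fun m => Rmax 1 (1 / (1 - c)) < INR m)); [| apply eventually_gt].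
  intros m Hm.
  assert (Hm1 : 1 < INR m) by (eapply Rle_lt_trans; [apply Rmax_l | exact Hm]).
  assert (Hmc : 1 / (1 - c) < INR m) by (eapply Rle_lt_trans; [apply Rmax_r | exact Hm]).
  apply (Rmult_lt_compat_l (1 - c)) in Hmc; [| lra].
  replace ((1 - c) * (1 / (1 - c))) with 1 in Hmc by (field; lra).
  apply (Rmult_le_reg_r (INR m)); [lra |].
  replace ((INR m - 1) / INR m * INR m) with (INR m - 1) by (field; lra).
  lra.
Qed.

Lemma Lambda_eventually_ge (dt theta : R) : 0 < dt -> 0 <= theta < 1 ->
  eventually (fun m => forall delta, dt <= delta -> delta * theta <= Lambda delta m).
Proof.
  intros Hdt Htheta.
  set (c := (1 + theta) / 2).
  assert (Hc2 : theta <= c * c) by (unfold c; nra).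
  apply (filter_imp (fun m => (forall delta, dt <= delta ->
      1 - (1 - c) <= Rpower (delta / INR m) (1 / (INR m - 1)))
    /\ c <= (INR m - 1) / INR m)).
  - intros m [Hroot Hratio] delta Hdelta.
    specialize (Hroot delta Hdelta).
    unfold Lambda.
    assert (c * c <= Rpower (delta / INR m) (1 / (INR m - 1)) * ((INR m - 1) / INR m))
      by (apply Rmult_le_compat; unfold c in *; lra).
    nra.
  - apply filter_and; [apply root_eventually_ge | apply ratio_eventually_ge];
      unfold c; lra.
Qed.

Lemma Cabs_Cmod (z : Cplx) : Cabs z = Cmod z.
Proof. destruct z as [x y]; unfold Cabs, Cmod, Cre, Cim; simpl; f_equal; ring. Qed.

Lemma Cabs_ge0 (z : Cplx) : 0 <= Cabs z.
Proof. rewrite Cabs_Cmod; apply Cmod_ge_0. Qed.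

Lemma Cabs_add (z w : Cplx) : Cabs (Cadd z w) <= Cabs z + Cabs w.
Proof. rewrite !Cabs_Cmod; apply (Cmod_triangle z w). Qed.

Lemma Cabs_mul (z w : Cplx) : Cabs (Cmul z w) = Cabs z * Cabs w.
Proof. rewrite !Cabs_Cmod; apply (Cmod_mult z w). Qed.

Lemma Cabs_scal (a : R) (z : Cplx) : Cabs (Cscal a z) = Rabs a * Cabs z.
Proof.
  replace (Cscal a z) with (Cmul (a, 0) z)
    by (destruct z; unfold Cmul, Cscal, Cre, Cim; simpl; f_equal; ring).
  rewrite Cabs_mul, (Cabs_Cmod (a, 0)); f_equal; apply Cmod_R.
Qed.

Lemma Cabs_pow (z : Cplx) (k : nat) : Cabs (Cpow z k) = Cabs z ^ k.
Proof.
  induction k as [| k IH]; simpl.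
  - rewrite Cabs_Cmod; apply Cmod_1.
  - rewrite Cabs_mul, IH; reflexivity.
Qed.

Lemma Cabs_sub_le (y z : Cplx) : Cabs y <= Cabs (Csub y z) + Cabs z.
Proof.
  replace y with (Cadd (Csub y z) z) at 1
    by (destruct y, z; unfold Csub, Cadd, Copp, Cre, Cim; simpl; f_equal; ring).
  apply Cabs_add.
Qed.

Lemma psi_inner (delta : R) (m : nat) (z : Cplx) :
  Cabs z <= 1 - 4 * delta / INR m -> psi delta m z = Cadd (Cpow z m) (Cscal delta z).
Proof.
  intros Hz; unfold psi, eta_hat.
  destruct (Rle_dec _ _) as [_ | Hn]; [| contradiction].
  now rewrite Rmult_1_r.
Qed.

Lemma beta_inner (R0 : R) (M : nat) (r : nat -> Cplx) (z : Cplx) :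
  1 < R0 -> Cabs z <= / R0 -> beta R0 M r z = z.
Proof.
  intros HR0 Hz.
  assert (/ R0 < R0) by (apply (Rmult_lt_reg_l R0); [lra | rewrite Rinv_r; nra]).
  unfold beta.
  destruct (Rle_dec R0 (Cabs z)); [reflexivity |].
  destruct (Rle_dec (Cabs z) (/ R0)); [reflexivity | contradiction].
Qed.

Lemma betaL_inner (Lam R0 : R) (M : nat) (r : nat -> Cplx) (z : Cplx) :
  0 < Lam -> 1 < R0 -> Cabs z <= Lam / R0 -> betaL Lam R0 M r z = z.
Proof.
  intros HLam HR0 Hz; unfold betaL.
  rewrite beta_inner; auto.
  - destruct z; unfold Cscal, Cre, Cim; simpl; f_equal; field; lra.
  - rewrite Cabs_scal, Rabs_right by (apply Rle_ge, Rlt_le, Rinv_0_lt_compat; lra).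
    apply (Rmult_le_compat_l (/ Lam)) in Hz; [| apply Rlt_le, Rinv_0_lt_compat; lra].
    replace (/ Lam * (Lam / R0)) with (/ R0) in Hz by (field; lra); exact Hz.
Qed.

Lemma rho_inner (w z : Cplx) : Cabs z <= 1 / 8 -> rho w z = Cadd z w.
Proof. intros Hz; unfold rho; destruct (Rle_dec _ _); [reflexivity | contradiction]. Qed.

Definition iota_model (w : Cplx) (delta : R) (m : nat) (z : Cplx) : Cplx :=
  Cadd (Cadd (Cpow z m) (Cscal delta z)) w.

Lemma iota_inner (w : Cplx) (delta : R) (m : nat) (R0 : R) (r : nat -> Cplx) (z : Cplx) :
  0 < Lambda delta m -> 1 < R0 ->
  Cabs z <= 1 - 4 * delta / INR m ->
  Cabs (Cadd (Cpow z m) (Cscal delta z)) <= Rmin (Lambda delta m / R0) (1 / 8) ->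
  iota w delta m R0 r z = iota_model w delta m z.
Proof.
  intros HLam HR0 Hz Hpsi; unfold iota.
  rewrite psi_inner, betaL_inner, rho_inner; auto;
    eapply Rle_trans; eauto; [apply Rmin_r | apply Rmin_l].
Qed.

Lemma psi_inner_bound (delta s1 : R) (m : nat) (z : Cplx) :
  0 <= delta -> Cabs z <= s1 ->
  Cabs (Cadd (Cpow z m) (Cscal delta z)) <= s1 ^ m + delta * s1.
Proof.
  intros Hdelta Hz.
  pose proof (Cabs_ge0 z).
  eapply Rle_trans; [apply Cabs_add |].
  rewrite Cabs_pow, Cabs_scal, Rabs_right by lra.
  assert (Cabs z ^ m <= s1 ^ m) by (apply pow_incr; lra).
  nra.
Qed.

Definition C_derivable_at (g : Cplx -> Cplx) (z : Cplx) : Prop :=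
  exists l : C, is_derive (K := C_AbsRing) (V := AbsRing_NormedModule C_AbsRing) g z l.

(* Commutativity of C, as required by Coquelicot's product rule. *)
Lemma C_mult_comm : forall a b : C_AbsRing, mult a b = mult b a.
Proof. intros; apply Cmult_comm. Qed.

Lemma Cpow_derivable (k : nat) (z : C_AbsRing) : C_derivable_at (fun y => Cpow y k) z.
Proof.
  induction k as [| k [l Hl]].
  - exists (@zero C_AbsRing).
    exact (is_derive_const (K := C_AbsRing) (V := AbsRing_NormedModule C_AbsRing) C1 z).
  - eexists.
    exact (is_derive_mult (K := C_AbsRing) (fun y => y) (fun y => Cpow y k : C_AbsRing)
             z _ _ (is_derive_id z) Hl C_mult_comm).
Qed.

Lemma iota_model_derivable (w : Cplx) (delta : R) (m : nat) (z : C_AbsRing) :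
  C_derivable_at (iota_model w delta m) z.
Proof.
  destruct (Cpow_derivable m z) as [l Hl].
  pose proof (is_derive_mult (K := C_AbsRing) (fun _ => (delta, 0) : C_AbsRing) (fun y => y)
      z _ _ (is_derive_const (K := C_AbsRing) (V := AbsRing_NormedModule C_AbsRing) _ z)
      (is_derive_id z) C_mult_comm) as Hlin.
  pose proof (is_derive_plus (K := C_AbsRing) (V := AbsRing_NormedModule C_AbsRing)
      _ _ z _ _ (is_derive_plus _ _ z _ _ Hl Hlin)
      (is_derive_const (K := C_AbsRing) (V := AbsRing_NormedModule C_AbsRing) (w : C_AbsRing) z))
    as Hsum.
  eexists; eapply is_derive_ext; [| exact Hsum].
  intros y; unfold iota_model.
  change (Cplus (Cplus (Cpow y m) (Cmult (delta, 0) y)) w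
          = Cadd (Cadd (Cpow y m) (Cscal delta y)) w).
  destruct (Cpow y m), y, w; unfold Cplus, Cmult, Cadd, Cscal, Cre, Cim; simpl; f_equal; ring.
Qed.

(* A function agreeing near z with a complex-differentiable g has
   f_zbar(z) = 0: its real derivative is (f_x, f_y) = (g', i g'). *)
Lemma dbar_zero_of_local_agreement (f g : Cplx -> Cplx) (z : Cplx) (rh : R) :
  0 < rh -> (forall y, Cabs (Csub y z) < rh -> f y = g y) ->
  C_derivable_at g z -> dbar_zero_at f z.
Proof.
  intros Hrh Hfg [l [_ Hd]].
  exists l, (Cmul Defs.Ci l); split.
  2: destruct l; unfold Cscal, Cadd, Cmul, Defs.Ci, C0, Cre, Cim; simpl; f_equal; field.
  intros eps Heps.
  destruct (Hd z (fun P HP => HP) (mkposreal eps Heps)) as [e He].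
  exists (Rmin e rh); split; [apply Rmin_pos; [apply cond_pos | lra] |].
  intros h Hh.
  assert (Ezh : Csub (Cadd z h) z = h)
    by (destruct z, h; unfold Csub, Cadd, Copp, Cre, Cim; simpl; f_equal; ring).
  assert (Hh0 : 0 <= Cabs h) by apply Cabs_ge0.
  rewrite (Hfg (Cadd z h)) by (rewrite Ezh; eapply Rlt_le_trans; [exact Hh | apply Rmin_r]).
  rewrite (Hfg z) by (replace (Csub z z) with (Cscal 0 z)
      by (destruct z; unfold Csub, Cadd, Copp, Cscal, Cre, Cim; simpl; f_equal; ring);
    rewrite Cabs_scal, Rabs_R0, Rmult_0_l; lra).
  assert (Hball : AbsRing_ball C_AbsRing z e (Cadd z h)).
  { unfold AbsRing_ball; change (Cmod (Csub (Cadd z h) z) < e).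
    rewrite Ezh, <- Cabs_Cmod; eapply Rlt_le_trans; [exact Hh | apply Rmin_l]. }
  specialize (He _ Hball).
  change (Cmod (Csub (Csub (g (Cadd z h)) (g z)) (Cmul (Csub (Cadd z h) z) l))
          <= eps * Cmod (Csub (Cadd z h) z)) in He.
  rewrite Ezh, <- !Cabs_Cmod in He.
  eapply Rle_trans; [| exact He]; right; f_equal.
  destruct (g (Cadd z h)), (g z), h, l.
  unfold Csub, Cadd, Copp, Cmul, Cscal, Defs.Ci, Cre, Cim; simpl; f_equal; ring.
Qed.

Lemma supp_dbar_in_annulus (f g : Cplx -> Cplx) (s s1 : R) :
  s < s1 ->
  (forall z, Cabs z < s1 -> f z = g z) ->
  (forall z, Cabs z < s1 -> C_derivable_at g z) ->
  supp_dbar_subset f (fun z => unit_disc z /\ s < Cabs z).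
Proof.
  intros Hs1 Hfg Hg.
  exists (fun z => Cabs z < s1); split; [| split].
  - intros z Hz; exists (s1 - Cabs z); split; [lra |].
    intros y Hy; pose proof (Cabs_sub_le y z); lra.
  - intros z Hz Hann; destruct (Rlt_le_dec s (Cabs z)); [exfalso; tauto | lra].
  - intros z Hz _.
    apply (dbar_zero_of_local_agreement f g z (s1 - Cabs z)); [lra | | now apply Hg].
    intros y Hy; apply Hfg; pose proof (Cabs_sub_le y z); lra.
Qed.

Lemma iota_eventually_model (s dt Rt : R) :
  0 < s < / Rt -> 1 < Rt -> 0 < dt ->
  exists s1, s < s1 /\ eventually (fun m =>
    forall R0 r w delta, 1 < R0 <= Rt -> dt <= delta <= 1 / 16 ->
    forall z, Cabs z < s1 -> iota w delta m R0 r z = iota_model w delta m z).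
Proof.
  intros Hs HRt Hdt.
  set (a := / Rt).
  assert (Ha : a < 1) by (unfold a; rewrite <- Rinv_1; apply Rinv_lt_contravar; lra).
  set (s1 := (2 * s + a) / 3).
  set (theta := (s + 2 * a) / (3 * a)).
  assert (Hsa : 0 < s < a) by exact Hs.
  assert (Ha0 : 0 < a) by lra.
  assert (Htheta : 0 <= theta < 1).
  { unfold theta; split; [apply Rlt_le, Rdiv_lt_0_compat; lra |].
    apply (Rmult_lt_reg_r (3 * a)); [lra |].
    replace ((s + 2 * a) / (3 * a) * (3 * a)) with (s + 2 * a) by (field; lra); lra. }
  assert (Hatheta : a * theta = s1 + (a - s) / 3) by (unfold theta, s1; field; lra).
  exists s1; split; [unfold s1; lra |].
  apply (filter_imp (fun m => (forall delta, dt <= delta -> delta * theta <= Lambda delta m)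
    /\ s1 ^ m <= Rmin (dt * (a - s) / 3) (1 / 16) /\ 1 / (4 * (1 - s1)) < INR m)).
  2: repeat apply filter_and; [apply Lambda_eventually_ge | apply pow_eventually_le |
       apply eventually_gt]; unfold s1; try lra; apply Rmin_pos; [| lra];
     apply Rdiv_lt_0_compat; nra.
  intros m (HLam & Hpow & Hm) R0 r w delta HR0 Hdelta z Hz.
  specialize (HLam delta (proj1 Hdelta)).
  pose proof (Rmin_l (dt * (a - s) / 3) (1 / 16)); pose proof (Rmin_r (dt * (a - s) / 3) (1 / 16)).
  pose proof (Cabs_ge0 z).
  assert (HaR0 : a <= / R0) by (unfold a; apply Rinv_le_contravar; lra).
  pose proof (psi_inner_bound delta s1 m z ltac:(lra) ltac:(lra)) as Hpsi.
  apply iota_inner; [nra | lra | |].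
  - (* 4 delta / m <= 1/(4 m) < 1 - s1 *)
    assert (Hm' : 1 < 4 * (1 - s1) * INR m).
    { apply (Rmult_lt_compat_l (4 * (1 - s1))) in Hm; [| unfold s1; lra].
      replace (4 * (1 - s1) * (1 / (4 * (1 - s1)))) with 1 in Hm by (field; unfold s1; lra).
      exact Hm. }
    assert (Hmpos : 0 < INR m) by (unfold s1 in *; nra).
    apply (Rle_trans _ s1); [lra |].
    assert (4 * delta / INR m <= 1 - s1); [| lra].
    apply (Rmult_le_reg_r (INR m)); [lra |].
    replace (4 * delta / INR m * INR m) with (4 * delta) by (field; lra); nra.
  - (* |z^m + delta z| <= a Lambda <= Lambda / R0, and <= 1/8 *)
    apply Rmin_glb.
    + apply (Rle_trans _ (a * Lambda delta m)).
      * assert (delta * (a - s) / 3 >= dt * (a - s) / 3) by (unfold s1 in *; nra).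
        nra.
      * unfold Rdiv; rewrite (Rmult_comm (Lambda _ _)); apply Rmult_le_compat_r; nra.
    + assert (delta * s1 <= 1 / 16) by (unfold s1 in *; nra). lra.
Qed.

Theorem proposition3p7 :
  forall n0 : nat, (0 < n0)%nat ->
  forall s dt Rt : R,
    0 < s < 1 -> 0 < dt < 1 / 16 -> 1 < Rt < 1 / s ->
  exists m0 : nat,
    forall (m : nat) (R0 : R) (r : nat -> Cplx) (w : Cplx) (delta : R),
      (m0 < m)%nat ->
      1 < R0 < Rmin Rt (3 / 2) ->
      E_eps (m - 1) (ln (Rpower R0 (1 / INR n0))) r ->
      Cabs w <= 3 / 4 ->
      dt <= delta <= 1 / 16 ->
      supp_dbar_subset (iota w delta m R0 r)
        (fun z => unit_disc z /\ s < Cabs z).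
Proof.
  intros n0 _ s dt Rt Hs Hdt HRt.
  assert (HsRt : s < / Rt).
  { apply (Rmult_lt_reg_l Rt); [lra |]; rewrite Rinv_r by lra.
    assert (Hlt : s * Rt < s * (1 / s)) by (apply Rmult_lt_compat_l; lra).
    replace (s * (1 / s)) with 1 in Hlt by (field; lra); lra. }
  destruct (iota_eventually_model s dt Rt ltac:(lra) ltac:(lra) ltac:(lra))
    as (s1 & Hss1 & N & Hmodel).
  exists N; intros m R0 r w delta Hm HR0 _ _ Hdelta.
  pose proof (Rmin_l Rt (3 / 2)).
  apply (supp_dbar_in_annulus _ (iota_model w delta m) s s1 Hss1).
  - intros z Hz; apply Hmodel; [lia | lra | lra | exact Hz].
  - intros z _; apply iota_model_derivable.
Qed.
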